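(* Assume $Q^s(X^*,\xi)$ is finite for all $\xi\in\Xi^s$ and $\mathcal P^s\neq\emptyset$. Let $\mathcal Z=\{0,1\}^{\mathcal K\times\mathcal T}$ and for $z\in\mathcal Z$ let $\xi^s(z)\in\mathbb R^{\mathcal K\times\mathcal T}$ be given by $\xi^s(z)_{kt}=\xi^{Ls}_{kt}+(\xi^{Us}_{kt}-\xi^{Ls}_{kt})z_{kt}$. Then $w^s(\mathcal P^s;X^* )$ equals the optimal value of the linear program $$\max\sum_{z\in\mathcal Z}P_zQ^s(X^*,\xi^s(z))\quad\text{s.t.}\quad\sum_{z\in\mathcal Z}P_z=1,\ P_z\ge0\ \forall z,\ \ \gamma^{Ls}_{kt}\le\sum_{z\in\mathcal Z}P_z\,\xi^s(z)_{kt}\le\gamma^{Us}_{kt}\ \forall k\in\mathcal K,t\in\mathcal T.$$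
   Context: Fix finite index sets $\mathcal K,\mathcal T$, a cluster index $s$, and a fixed first-stage decision $X^*$. For a demand vector $\xi=(\xi_{kt})_{k\in\mathcal K,t\in\mathcal T}$, the recourse value is $Q^s(X^*,\xi)=\min\{C_Y^\top Y:\ B_YY\ge d-B^s_XX^*-B_\xi\xi,\ Y\ge 0\}$ (value $+\infty$ if infeasible), where $C_Y,B_Y,B_\xi,B^s_X,d$ are fixed data not depending on $\xi$. Given $\xi^{Ls}\le\xi^{Us}$ and $\gamma^{Ls}\le\gamma^{Us}$ in $\mathbb R^{\mathcal K\times\mathcal T}$, $\Xi^s=\{\xi:\xi^{Ls}_{kt}\le\xi_{kt}\le\xi^{Us}_{kt}\ \forall k,t\}$ and $\mathcal P^s$ is the set of probability distributions $\mathbb P$ supported on $\Xi^s$ with $\gamma^{Ls}_{kt}\le\mathbb E_{\mathbb P}[\xi_{kt}]\le\gamma^{Us}_{kt}$ for all $k,t$. The worst-case expected recourse value is $w^s(\mathcal P^s;X^* )=\sup_{\mathbb P\in\mathcal P^s}\mathbb E_{\mathbb P}[Q^s(X^*,\xi)]$. *)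

From HB Require Import structures.
From mathcomp Require Import all_boot all_order all_algebra.
From mathcomp Require Import all_classical all_reals all_analysis.
Set Implicit Arguments. Unset Strict Implicit. Unset Printing Implicit Defensive.
Import Order.TTheory GRing.Theory Num.Theory.
Local Open Scope classical_set_scope.
Local Open Scope ring_scope.

Section DRO.
Variables (R : realType) (K T : finType).

Definition demand := K -> T -> R.
HB.instance Definition _ := gen_eqMixin demand.
HB.instance Definition _ := gen_choiceMixin demand.
HB.instance Definition _ := isPointed.Build demand (fun _ _ => 0).

Definition coord_sets : set (set demand) :=
  fun S => exists k t (A : set R), measurable A /\ S = [set xi | A (xi k t)].

Definition demandSpace : measurableType (sigma_display coord_sets) :=
  g_sigma_algebraType (coord_sets : set (set (demand : pointedType))).

(* B_xi xi, where the column of B_xi indexed by (k,t) is Bxi k t *)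
Definition apply_Bxi (p : nat) (Bxi : K -> T -> 'cV[R]_p) (xi : demand) : 'cV[R]_p :=
  \sum_(k : K) \sum_(t : T) xi k t *: Bxi k t.

Definition recourse_feasible (p m q : nat) (BY : 'M[R]_(p, m))
  (Bxi : K -> T -> 'cV[R]_p) (BX : 'M[R]_(p, q)) (d : 'cV[R]_p) (X : 'cV[R]_q)
  (xi : demand) (Y : 'cV[R]_m) : Prop :=
  (forall i, (d - BX *m X - apply_Bxi Bxi xi) i 0 <= (BY *m Y) i 0) /\
  (forall j, 0 <= Y j 0).

(* Q^s(X, xi) = min { C_Y^T Y : B_Y Y >= d - B_X X - B_xi xi, Y >= 0 },
   +oo if infeasible (infimum of the empty set) *)
Definition recourse (p m q : nat) (CY : 'cV[R]_m) (BY : 'M[R]_(p, m))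
  (Bxi : K -> T -> 'cV[R]_p) (BX : 'M[R]_(p, q)) (d : 'cV[R]_p) (X : 'cV[R]_q)
  (xi : demand) : \bar R :=
  ereal_inf [set ((CY^T *m Y) 0 0)%:E | Y in recourse_feasible BY Bxi BX d X xi].

Definition box (xiL xiU : demand) : set demand :=
  [set xi | forall k t, xiL k t <= xi k t <= xiU k t].

Definition ambiguity_set (xiL xiU gammaL gammaU : demand)
  : set (probability demandSpace R) :=
  [set P | P (box xiL xiU : set demandSpace) = 1%E /\
     forall k t, ((gammaL k t)%:E <= \int[P]_x (x k t)%:E
                 <= (gammaU k t)%:E)%E].

Definition worst_case (Qf : demand -> \bar R) (Pset : set (probability demandSpace R))
  : \bar R :=
  ereal_sup [set (\int[P]_x Qf x)%E | P in Pset].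

Definition vertex (xiL xiU : demand) (z : {ffun K * T -> bool}) : demand :=
  fun k t => xiL k t + (xiU k t - xiL k t) * (z (k, t))%:R.

Definition vertex_lp_feasible (xiL xiU gammaL gammaU : demand)
  (Pz : {ffun {ffun K * T -> bool} -> R}) : Prop :=
  \sum_z Pz z = 1 /\ (forall z, 0 <= Pz z) /\
  forall k t, gammaL k t <= \sum_z Pz z * vertex xiL xiU z k t <= gammaU k t.

Definition vertex_lp_value (Qf : demand -> \bar R) (xiL xiU gammaL gammaU : demand)
  : \bar R :=
  ereal_sup [set (\sum_z (Pz z)%:E * Qf (vertex xiL xiU z))%E
            | Pz in vertex_lp_feasible xiL xiU gammaL gammaU].

End DRO.

From HB Require Import structures.
From mathcomp Require Import all_boot all_order all_algebra.
From mathcomp Require Import all_classical all_reals all_analysis.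
From mathcomp Require Import measurable_realfun lra.
Import Order.TTheory GRing.Theory Num.Theory.
Local Open Scope classical_set_scope.
Local Open Scope ring_scope.

(* A point xi of the box is the mean of the product distribution on the
   vertices whose coordinate (k, t) is 1 with probability
   (xi_kt - xiL_kt) / (xiU_kt - xiL_kt); its weights lambda_z(xi) depend
   measurably on xi.  The recourse value is convex in xi, so
   Q(xi) <= sum_z lambda_z(xi) Q(v_z).  Integrating against P in P^s gives
   E_P[Q] <= sum_z E_P[lambda_z] Q(v_z), and (E_P[lambda_z])_z is feasible for
   the vertex LP because its mean is E_P[xi].  Conversely, a feasible point of
   the vertex LP is the weight vector of a distribution on the vertices, which
   belongs to P^s. *)

(* The recourse function is not known to be measurable, so integrals are
   compared assuming measurability of the bounding function only. *)
Section integral_nonmeasurable.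
Local Open Scope ereal_scope.
Context d (T : measurableType d) (R : realType) (mu : {measure set T -> \bar R}).
Implicit Types f g : T -> \bar R.

Lemma ge0_le_integralT f g : (forall x, 0 <= f x) -> (forall x, f x <= g x) ->
  \int[mu]_x f x <= \int[mu]_x g x.
Proof.
move=> f0 fg; have g0 x : 0 <= g x by apply: le_trans (f0 x) (fg x).
rewrite !ge0_integralTE//; apply: ereal_sup_le => _ [h hf <-]; exists h => //.
by move=> x; apply: le_trans (hf x) (fg x).
Qed.

Lemma le_integralT f g : (forall x, f x <= g x) ->
  \int[mu]_x f x <= \int[mu]_x g x.
Proof.
move=> fg; rewrite (integralE _ _ f) (integralE _ _ g); apply: leeB.
  apply: ge0_le_integralT => [x|x]; first exact: funepos_ge0.
  by apply: (@funepos_le _ _ setT) => [y _|]; rewrite ?in_setT.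
apply: ge0_le_integralT => [x|x]; first exact: funeneg_ge0.
by apply: (@funeneg_le _ _ setT) => [y _|]; rewrite ?in_setT.
Qed.

Let measurable_fun_mem (N : set T) : measurable N ->
  measurable_fun setT (fun x => x \in N).
Proof.
move=> mN; apply: (measurable_fun_bool true); rewrite setTI.
rewrite (_ : _ @^-1` _ = N)//.
by apply/seteqP; split => x /=; [move/set_mem|move/mem_set].
Qed.

Lemma ae_le_integral_measurable_r f g : measurable_fun setT g ->
  {ae mu, forall x, f x <= g x} -> \int[mu]_x f x <= \int[mu]_x g x.
Proof.
move=> mg [N [mN N0 fgN]].
pose g' x := if x \in N then +oo else g x.
apply: (@le_trans _ _ (\int[mu]_x g' x)).
  apply: le_integralT => x; rewrite /g'; case: ifPn => [_|/negP xN]; first exact: leey.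
  by apply: contrapT => /(fgN x) /mem_set.
rewrite (ae_eq_integral g) ?lexx//.
- by apply: measurable_fun_ifT => //; exact: measurable_fun_mem.
- exists N; split => // x /=; apply: contra_notP => xN _.
  by rewrite /g' memNset.
Qed.

Lemma ae_le_integral_measurable_l f g : measurable_fun setT f ->
  {ae mu, forall x, f x <= g x} -> \int[mu]_x f x <= \int[mu]_x g x.
Proof.
move=> mf [N [mN N0 fgN]].
pose f' x := if x \in N then -oo else f x.
apply: (@le_trans _ _ (\int[mu]_x f' x)); last first.
  apply: le_integralT => x; rewrite /f'; case: ifPn => [_|/negP xN]; first exact: leNye.
  by apply: contrapT => /(fgN x) /mem_set.
rewrite (ae_eq_integral f') ?lexx//.
- by apply: measurable_fun_ifT => //; exact: measurable_fun_mem.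
- exists N; split => // x /=; apply: contra_notP => xN _.
  by rewrite /f' memNset.
Qed.

End integral_nonmeasurable.

Lemma measurable_interpolant {d} {T : measurableType d} {R : realType}
    (s : seq T) (c : T -> R) : (forall x : T, measurable [set x]) ->
  exists2 g : T -> R, measurable_fun setT g & {in s, g =1 c}.
Proof.
move=> m1; pose u := undup s.
exists (fun x => \sum_(b <- u) c b * \1_[set b] x).
  apply: measurable_sum => b; apply: measurable_funM; first exact: measurable_cst.
  exact: measurable_indic.
move=> x; rewrite -mem_undup => xu; rewrite (big_rem x)//= indicE mem_set// mulr1.
rewrite big_seq big1 ?addr0// => b; rewrite indicE.
have [->|bx] := eqVneq b x; first by rewrite mem_rem_uniqF ?undup_uniq.
by rewrite memNset ?mulr0// => /= xb; rewrite xb eqxx in bx.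
Qed.

Record fdist (R : realType) (I : finType) := FDist {
  fdist_fun :> I -> R;
  fdist_ge0 : forall i, 0 <= fdist_fun i;
  fdist_sum1 : \sum_i fdist_fun i = 1 }.
Arguments FDist {R I}.
Arguments fdist_ge0 {R I}.
Arguments fdist_sum1 {R I}.

Section finite_mixture.
Context {d} {T : measurableType d} {R : realType} {I : finType}.
Variables (w : fdist R I) (a : I -> T).
Local Notation measureT := {measure set T -> \bar R}.

Let atom (i : I) : measureT :=
  mscale (NngNum (fdist_ge0 w i)) \d_(a i).

Let atoms : seq measureT := [seq atom i | i <- index_enum I].

(* Indexed by [nat] through [index_enum I] to reuse the integration theory of
   [msum]. *)
Definition mixture : set T -> \bar R := msum (nth (mzero : measureT) atoms) #|I|.

Let sum_atoms (F : measureT -> \bar R) :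
  (\sum_(k < #|I|) F (nth (mzero : measureT) atoms k) = \sum_i F (atom i))%E.
Proof.
rewrite [RHS](_ : _ = \sum_(m <- atoms) F m)%E; last by rewrite big_map.
rewrite (big_nth (mzero : measureT)) size_map.
by rewrite cardT enumT big_mkord.
Qed.

Lemma mixtureE A : mixture A = (\sum_i (w i)%:E * \d_(a i) A)%E.
Proof. exact: (sum_atoms (fun m => m A)). Qed.

Let mixture0 : mixture set0 = 0%E. Proof. exact: measure0. Qed.
Let mixture_ge0 A : (0 <= mixture A)%E. Proof. exact: measure_ge0. Qed.
Let mixture_sigma_additive : semi_sigma_additive mixture.
Proof. exact: measure_semi_sigma_additive. Qed.
HB.instance Definition _ := isMeasure.Build _ _ _ mixture
  mixture0 mixture_ge0 mixture_sigma_additive.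

Let mixture_setT : mixture setT = 1%E.
Proof.
rewrite mixtureE; under eq_bigr do rewrite diracT mule1.
by rewrite sumEFin (fdist_sum1 w).
Qed.
HB.instance Definition _ := Measure_isProbability.Build _ _ _ mixture mixture_setT.

Lemma ge0_integral_mixture (f : T -> \bar R) : measurable_fun setT f ->
  (forall x, 0 <= f x)%E ->
  (\int[mixture]_x f x = \sum_i (w i)%:E * f (a i))%E.
Proof.
move=> mf f0; rewrite ge0_integral_measure_sum// (sum_atoms (fun m => \int[m]_x f x)%E).
apply: eq_bigr => i _.
by rewrite ge0_integral_mscale//= integral_dirac// diracT mul1e.
Qed.

Let fin_num_max0 (x : \bar R) : x \is a fin_num -> (maxe x 0)%E \is a fin_num.
Proof. by move=> xfin; rewrite /Order.max; case: ifP. Qed.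

Lemma integral_mixture_measurable (f : T -> \bar R) : measurable_fun setT f ->
  (forall i, f (a i) \is a fin_num) ->
  (\int[mixture]_x f x = \sum_i (w i)%:E * f (a i))%E.
Proof.
move=> mf ffin; rewrite integralE.
rewrite !ge0_integral_mixture//; [|exact: measurable_funeneg|exact: measurable_funepos].
rewrite -fin_num_sumeN; last first.
  by move=> i _; rewrite fin_numM// funenegE fin_num_max0// fin_numN.
rewrite -big_split /=; apply: eq_bigr => i _.
rewrite [in RHS](funeposneg f) muleBr//.
by apply: fin_num_adde_defr; rewrite funeposE fin_num_max0.
Qed.

Lemma mixture_ae_atoms : (forall x : T, measurable [set x]) ->
  {ae mixture, forall x, exists i, x = a i}.
Proof.
move=> m1; exists (~` \bigcup_i [set a i]); split.
- apply: measurableC; apply: fin_bigcup_measurable => [|i _]; last exact: m1.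
  exact: finite_finset.
- rewrite mixtureE big1// => i _; rewrite diracE memNset ?mule0//.
  by apply; exists i.
- by move=> x /= nx [i _ xi]; apply: nx; exists i.
Qed.

Lemma integral_mixture (f : T -> \bar R) : (forall x : T, measurable [set x]) ->
  (forall i, f (a i) \is a fin_num) ->
  (\int[mixture]_x f x = \sum_i (w i)%:E * f (a i))%E.
Proof.
move=> m1 ffin.
have [g mg gf] := measurable_interpolant [seq a i | i <- index_enum I] (fine \o f) m1.
have gE i : (g (a i))%:E = f (a i) by rewrite gf ?fineK// map_f ?mem_index_enum.
have fg : {ae mixture, forall x, f x = (g x)%:E}.
  by apply: filterS (mixture_ae_atoms m1) => _ [i ->]; rewrite gE.
have mEg : measurable_fun setT (EFin \o g) by exact/measurable_EFinP.
rewrite -(eq_bigr _ (fun i _ => congr1 _ (gE i))) -(integral_mixture_measurable _ mEg)//.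
apply/le_anti/andP; split.
  by apply: ae_le_integral_measurable_r => //; apply: filterS fg => x ->.
by apply: ae_le_integral_measurable_l => //; apply: filterS fg => x ->.
Qed.

End finite_mixture.

Section cube_weight.
Context {R : realType} {I : finType} (c : I -> R).

Definition cube_weight (z : {ffun I -> bool}) : R :=
  \prod_i (if z i then c i else 1 - c i).

Lemma sum_cube_weight : \sum_z cube_weight z = 1.
Proof.
rewrite /cube_weight -(bigA_distr_bigA (fun i (b : bool) => if b then c i else 1 - c i)).
by apply: big1 => i _; rewrite big_bool /= addrC subrK.
Qed.

Lemma sum_cube_weight_coord j : \sum_z cube_weight z * (z j)%:R = c j.
Proof.
pose F i (b : bool) := (if b then c i else 1 - c i) * (if i == j then b%:R else 1).
transitivity (\sum_(z : {ffun I -> bool}) \prod_i F i (z i)).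
  apply: eq_bigr => z _; rewrite /cube_weight (bigD1 j)//= [in RHS](bigD1 j)//= /F eqxx.
  under [in RHS]eq_bigr => i /negbTE -> do rewrite mulr1.
  by rewrite mulrAC.
rewrite -(bigA_distr_bigA F) (bigD1 j)//= [X in _ * X]big1 ?mulr1.
  by rewrite big_bool /F /= eqxx mulr1 mulr0 addr0.
by move=> i /negbTE ij; rewrite big_bool /F /= ij !mulr1 addrC subrK.
Qed.

Hypothesis c01 : forall i, 0 <= c i <= 1.

Lemma cube_weight_ge0 z : 0 <= cube_weight z.
Proof.
apply: prodr_ge0 => i _; have /andP[c0 c1] := c01 i.
by case: (z i); rewrite ?subr_ge0.
Qed.

Lemma cube_weight_le1 z : cube_weight z <= 1.
Proof.
apply: prodr_ile1 => i _; have /andP[c0 c1] := c01 i.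
by case: (z i); apply/andP; split; lra.
Qed.

End cube_weight.

Section recourse_convexity.
Variables (R : realType) (K T : finType) (p m q : nat).
Variables (CY : 'cV[R]_m) (BY : 'M[R]_(p, m)) (Bxi : K -> T -> 'cV[R]_p).
Variables (BX : 'M[R]_(p, q)) (d : 'cV[R]_p) (X : 'cV[R]_q).
Variables (J : finType) (w : J -> R) (v : J -> demand R K T) (xi : demand R K T).
Hypotheses (w_ge0 : forall j, 0 <= w j) (w_sum1 : \sum_j w j = 1).
Hypothesis xiE : forall k t, xi k t = \sum_j w j * v j k t.

Let mulmx_comb n (M : 'M[R]_(n, m)) (Y : J -> 'cV[R]_m) i :
  (M *m (\sum_j w j *: Y j)) i 0 = \sum_j w j * (M *m Y j) i 0.
Proof.
rewrite mulmx_sumr summxE; apply: eq_bigr => j _.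
by rewrite -scalemxAr mxE.
Qed.

Lemma apply_Bxi_comb : apply_Bxi Bxi xi = \sum_j w j *: apply_Bxi Bxi (v j).
Proof.
rewrite /apply_Bxi.
transitivity (\sum_k \sum_t \sum_j (w j * v j k t) *: Bxi k t).
  by apply: eq_bigr => k _; apply: eq_bigr => t _; rewrite xiE scaler_suml.
under eq_bigr => k _ do rewrite exchange_big.
rewrite exchange_big; apply: eq_bigr => j _; rewrite scaler_sumr.
apply: eq_bigr => k _; rewrite scaler_sumr; apply: eq_bigr => t _.
by rewrite scalerA.
Qed.

Lemma recourse_feasible_comb (Y : J -> 'cV[R]_m) :
  (forall j, recourse_feasible BY Bxi BX d X (v j) (Y j)) ->
  recourse_feasible BY Bxi BX d X xi (\sum_j w j *: Y j).
Proof.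
move=> feasY; split => i; rewrite ?mulmx_comb.
- have -> : (d - BX *m X - apply_Bxi Bxi xi) i 0 =
      \sum_j w j * (d - BX *m X - apply_Bxi Bxi (v j)) i 0.
    rewrite apply_Bxi_comb !mxE summxE.
    under [RHS]eq_bigr => j _ do rewrite !mxE mulrBr mulrDr.
    rewrite sumrB big_split /= -!mulr_suml w_sum1 !mul1r; congr (_ - _).
    by apply: eq_bigr => j _; rewrite mxE.
  by apply: ler_sum => j _; apply: ler_wpM2l => //; case: (feasY j) => + _; apply.
- rewrite summxE; apply: sumr_ge0 => j _; rewrite mxE.
  by apply: mulr_ge0 => //; case: (feasY j) => _; apply.
Qed.

Local Notation Q := (recourse CY BY Bxi BX d X).

Lemma recourse_convex : (forall j, Q (v j) \is a fin_num) ->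
  (Q xi <= (\sum_j w j * fine (Q (v j)))%:E)%E.
Proof.
move=> Qfin; apply/lee_addgt0Pr => e e0.
have nearly_optimal j : exists Y, recourse_feasible BY Bxi BX d X (v j) Y /\
    (CY^T *m Y) 0 0 < fine (Q (v j)) + e.
  have [_ [Y feasY <-]] := lb_ereal_inf_adherent e0 (Qfin j).
  rewrite -/(Q (v j)) -(fineK (Qfin j)) -EFinD lte_fin => QY.
  by exists Y.
have [Y HY] := boolp.choice nearly_optimal.
apply: (@le_trans _ _ ((CY^T *m \sum_j w j *: Y j) 0 0)%:E).
  by apply: ereal_inf_lbound; exists (\sum_j w j *: Y j) => //;
    apply: recourse_feasible_comb => j; case: (HY j).
rewrite -EFinD lee_fin mulmx_comb -[e in X in _ <= X]mul1r -w_sum1 mulr_suml -big_split.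
apply: ler_sum => j _ /=; rewrite -mulrDr; apply: ler_wpM2l => //.
by case: (HY j) => _ /ltW.
Qed.

End recourse_convexity.

Section demand_space.
Context {R : realType} {K T : finType}.
Local Notation DS := (demandSpace R K T).

Lemma measurable_coord k t : measurable_fun setT (fun xi : DS => xi k t).
Proof. by move=> _ A mA; rewrite setTI; apply: sub_sigma_algebra; exists k, t, A. Qed.

Lemma measurable_coords (A : K -> T -> set R) : (forall k t, measurable (A k t)) ->
  measurable [set xi : DS | forall k t, A k t (xi k t)].
Proof.
move=> mA; rewrite (_ : [set xi | _] = \bigcap_(i in [set: K * T])
    ((fun xi : DS => xi i.1 i.2) @^-1` A i.1 i.2)).
  apply: fin_bigcap_measurable => [|i _]; first exact: finite_finset.
  by rewrite -[_ @^-1` _]setTI; apply: measurable_coord.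
apply/seteqP; split => [xi Axi i _|xi Axi k t]; first exact: Axi.
exact: (Axi (k, t)).
Qed.

Lemma demand_measurable_set1 (xi : DS) : measurable [set xi].
Proof.
rewrite (_ : [set xi] = [set xi' : DS | forall k t, [set xi k t] (xi' k t)]).
  by apply: (measurable_coords (fun k t => [set xi k t])) => k t; exact: measurable_set1.
apply/seteqP; split => [_ -> //|xi' /= xiE].
by apply/funext => k; apply/funext => t; rewrite xiE.
Qed.

Variables (xiL xiU : demand R K T).

Lemma measurable_box : measurable (box xiL xiU : set DS).
Proof.
pose I k t := [set` `[xiL k t, xiU k t]].
rewrite (_ : box xiL xiU = [set xi : DS | forall k t, I k t (xi k t)]).
  by apply: (measurable_coords I) => k t; exact: measurable_itv.
by apply/seteqP; split => xi /= + k t => /(_ k t); rewrite /I /= in_itv.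
Qed.

Local Notation Z := {ffun K * T -> bool}.

Lemma vertex_in_box z : (forall k t, xiL k t <= xiU k t) ->
  box xiL xiU (vertex xiL xiU z).
Proof.
move=> xiLU k t; rewrite /vertex; have := xiLU k t.
by case: (z (k, t)) => /= h; apply/andP; split; rewrite ?mulr1 ?mulr0 ?addr0 ?lexx//; lra.
Qed.

(* Clamped to [0, 1] so that the weights are bounded on the whole space;
   when xiL = xiU the quotient is x / 0 = 0. *)
Definition box_coord (xi : demand R K T) (i : K * T) : R :=
  Num.min (Num.max ((xi i.1 i.2 - xiL i.1 i.2) / (xiU i.1 i.2 - xiL i.1 i.2)) 0) 1.

Definition box_weight (z : Z) (xi : demand R K T) : R := cube_weight (box_coord xi) z.

Let box_coord01 xi i : 0 <= box_coord xi i <= 1.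
Proof. by rewrite /box_coord le_min ler01 le_max lexx orbT ge_min lexx orbT. Qed.

Let box_coordK xi k t : box xiL xiU xi ->
  xiL k t + (xiU k t - xiL k t) * box_coord xi (k, t) = xi k t.
Proof.
move=> /(_ k t) /andP[Lxi xiU_]; rewrite /box_coord /=.
have [UL|UL] := eqVneq (xiU k t) (xiL k t).
  have -> : xi k t = xiL k t by apply/le_anti; rewrite Lxi -UL xiU_.
  by rewrite UL subrr mul0r addr0.
have UL_gt0 : 0 < xiU k t - xiL k t.
  by rewrite subr_gt0 lt_neqAle eq_sym UL (le_trans Lxi xiU_).
set y := _ / _.
have y0 : 0 <= y by apply: divr_ge0; [rewrite subr_ge0|exact: ltW].
have y1 : y <= 1 by rewrite /y ler_pdivrMr// mul1r lerB.
rewrite (max_idPl y0) (min_idPl y1).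
by rewrite /y mulrC divfK ?gt_eqF// addrC subrK.
Qed.

Lemma box_weight_ge0 z xi : 0 <= box_weight z xi.
Proof. exact: cube_weight_ge0. Qed.

Lemma box_weight_bound z xi : `|box_weight z xi| <= 1.
Proof. by rewrite ger0_norm ?box_weight_ge0// cube_weight_le1. Qed.

Lemma sum_box_weight xi : \sum_z box_weight z xi = 1.
Proof. exact: sum_cube_weight. Qed.

Lemma box_weight_comb xi : box xiL xiU xi ->
  forall k t, xi k t = \sum_z box_weight z xi * vertex xiL xiU z k t.
Proof.
move=> xi_box k t; rewrite /vertex; under eq_bigr => z _ do rewrite mulrDr mulrCA.
rewrite big_split /= -mulr_suml -mulr_sumr sum_box_weight mul1r.
by rewrite (sum_cube_weight_coord _ (k, t)) box_coordK.
Qed.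

Lemma measurable_box_weight z : measurable_fun setT (box_weight z : DS -> R).
Proof.
have mcoord i : measurable_fun setT (fun xi : DS => box_coord xi i).
  apply: measurable_minr; last exact: measurable_cst.
  apply: measurable_maxr; last exact: measurable_cst.
  apply: measurable_funM; last exact: measurable_cst.
  by apply: measurable_funB; [exact: measurable_coord|exact: measurable_cst].
apply: measurable_prod => i _; case: (z i); first exact: mcoord.
by apply: measurable_funB; [exact: measurable_cst|exact: mcoord].
Qed.

End demand_space.

Section worst_case_bounds.
Variables (R : realType) (K T : finType) (p m q : nat).
Variables (CY : 'cV[R]_m) (BY : 'M[R]_(p, m)) (Bxi : K -> T -> 'cV[R]_p).
Variables (BX : 'M[R]_(p, q)) (d : 'cV[R]_p) (X : 'cV[R]_q).
Variables (xiL xiU gammaL gammaU : demand R K T).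
Hypothesis xiLU : forall k t, xiL k t <= xiU k t.
Local Notation Q := (recourse CY BY Bxi BX d X).
Hypothesis Qfin : forall xi, box xiL xiU xi -> Q xi \is a fin_num.
Local Notation Z := {ffun K * T -> bool}.
Local Notation DS := (demandSpace R K T).
Local Notation v := (vertex xiL xiU).
Local Notation P_s := (ambiguity_set xiL xiU gammaL gammaU).

Lemma integrable_box_weight (P : probability DS R) z :
  P.-integrable setT (EFin \o box_weight xiL xiU z).
Proof.
apply: measurable_bounded_integrable => //.
- exact: le_lt_trans (probability_le1 P measurableT) (ltry _).
- exact: measurable_box_weight.
exists 1; split; rewrite ?num_real// => M M1 x _.
by rewrite /= (le_trans _ (ltW M1))// box_weight_bound.
Qed.

Definition mean_box_weight (P : probability DS R) : {ffun Z -> R} :=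
  [ffun z => fine (\int[P]_x (box_weight xiL xiU z x)%:E)%E].

Lemma integral_box_weight_comb (P : probability DS R) (c : Z -> R) :
  (\int[P]_x (\sum_z box_weight xiL xiU z x * c z)%:E =
   (\sum_z mean_box_weight P z * c z)%:E)%E.
Proof.
transitivity (\sum_z \int[P]_x ((box_weight xiL xiU z x)%:E * (c z)%:E))%E.
  rewrite -integral_sum//; last by move=> z; exact/integrableZr/integrable_box_weight.
  by apply: eq_integral => x _; rewrite -sumEFin; apply: eq_bigr => z _; rewrite EFinM.
rewrite -sumEFin; apply: eq_bigr => z _.
rewrite integralZr ?integrable_box_weight// EFinM ffunE fineK//.
exact/integrable_fin_num/integrable_box_weight.
Qed.

Let ae_box {P : probability DS R} (A : DS -> Prop) : P (box xiL xiU) = 1%E ->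
  (forall x, box xiL xiU x -> A x) -> {ae P, forall x, A x}.
Proof.
move=> P1 boxA; exists (~` box xiL xiU); split; last by move=> x /= nAx /boxA.
  by apply: measurableC; exact: measurable_box.
by rewrite (probability_setC P (measurable_box xiL xiU)) P1 subee.
Qed.

Lemma mean_box_weight_feasible P : P_s P ->
  vertex_lp_feasible xiL xiU gammaL gammaU (mean_box_weight P).
Proof.
move=> [P1 Pmean]; split; [|split].
- apply: EFin_inj; rewrite -(eq_bigr _ (fun z _ => mulr1 _)) -integral_box_weight_comb.
  under eq_integral do rewrite (eq_bigr _ (fun z _ => mulr1 _)) sum_box_weight.
  by rewrite integral_cst//= mul1e; exact: probability_setT.
- move=> z; rewrite ffunE fine_ge0// integral_ge0// => x _.
  by rewrite lee_fin box_weight_ge0.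
- move=> k t; rewrite -!lee_fin -integral_box_weight_comb.
  rewrite (ae_eq_integral (fun x : DS => (x k t)%:E)) //.
  + apply/measurable_EFinP; apply: measurable_sum => z.
    by apply: measurable_funM; [exact: measurable_box_weight|exact: measurable_cst].
  + by apply/measurable_EFinP; exact: measurable_coord.
  + by rewrite /ae_eq; apply: (ae_box _ P1) => x /box_weight_comb <-.
Qed.

Lemma integral_recourse_le P : P_s P ->
  (\int[P]_x Q x <= \sum_z (mean_box_weight P z)%:E * Q (v z))%E.
Proof.
move=> [P1 _].
have Qv z : Q (v z) \is a fin_num by apply/Qfin/vertex_in_box.
under eq_bigr => z _ do rewrite -(fineK (Qv z)) -EFinM.
rewrite sumEFin -integral_box_weight_comb.
apply: ae_le_integral_measurable_r.
  apply/measurable_EFinP; apply: measurable_sum => z.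
  by apply: measurable_funM; [exact: measurable_box_weight|exact: measurable_cst].
apply: (ae_box _ P1) => x xbox; apply: recourse_convex => //.
- by move=> z; exact: box_weight_ge0.
- exact: sum_box_weight.
- exact: box_weight_comb.
Qed.

Lemma worst_case_le_vertex_lp :
  (worst_case Q P_s <= vertex_lp_value Q xiL xiU gammaL gammaU)%E.
Proof.
apply: ge_ereal_sup => _ [P PP <-].
apply: (le_trans (integral_recourse_le _ PP)).
apply: ereal_sup_ubound; exists (mean_box_weight P) => //.
exact: mean_box_weight_feasible.
Qed.

Lemma vertex_lp_le_worst_case :
  (vertex_lp_value Q xiL xiU gammaL gammaU <= worst_case Q P_s)%E.
Proof.
apply: ge_ereal_sup => _ [w [w_sum1 [w_ge0 w_mean]] <-].
pose P := @mixture _ DS _ _ (FDist w w_ge0 w_sum1) v.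
have integral_P f : (forall z, f (v z) \is a fin_num) ->
    (\int[P]_x f x = \sum_z (w z)%:E * f (v z))%E.
  exact: integral_mixture demand_measurable_set1.
rewrite -integral_P; last by move=> z; apply/Qfin/vertex_in_box.
apply: ereal_sup_ubound; exists P => //; split.
  rewrite /P /reverse_coercion /= mixtureE.
  under eq_bigr do rewrite diracE (mem_set (vertex_in_box _ _ _ xiLU)) mule1.
  by rewrite sumEFin w_sum1.
move=> k t; rewrite integral_P//; under eq_bigr do rewrite -EFinM.
by rewrite sumEFin !lee_fin w_mean.
Qed.

End worst_case_bounds.

Theorem corollary1 (R : realType) (K T : finType) (p m q : nat)
  (CY : 'cV[R]_m) (BY : 'M[R]_(p, m)) (Bxi : K -> T -> 'cV[R]_p)
  (BX : 'M[R]_(p, q)) (d : 'cV[R]_p) (X : 'cV[R]_q)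
  (xiL xiU gammaL gammaU : demand R K T) :
  (forall k t, xiL k t <= xiU k t) ->
  (forall k t, gammaL k t <= gammaU k t) ->
  (forall xi, box xiL xiU xi ->
     recourse CY BY Bxi BX d X xi \is a fin_num) ->
  ambiguity_set xiL xiU gammaL gammaU !=set0 ->
  worst_case (recourse CY BY Bxi BX d X) (ambiguity_set xiL xiU gammaL gammaU)
  = vertex_lp_value (recourse CY BY Bxi BX d X) xiL xiU gammaL gammaU.
Proof.
move=> xiLU _ Qfin _; apply/le_anti/andP; split.
- by apply: worst_case_le_vertex_lp.
- by apply: vertex_lp_le_worst_case.
Qed.
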